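(* Let $I\subset\mathbb R$ be an interval and $\alpha\in C^\infty(I,C^\infty(\mathbb S))$ a solution of $\frac{\partial\alpha_\tau}{\partial\tau}=-\alpha_\tau(\Lambda\alpha_\tau)+(\mathcal H\alpha_\tau)(D\alpha_\tau)$ on $I$ such that $\alpha_\tau$ is a positive function for every $\tau\in I$. Then $\int_0^{2\pi}\alpha_\tau^{-1}\,d\theta$ is independent of $\tau\in I$.
   Context: $D=-i\,d/d\theta$, $\Lambda e^{in\theta}=|n|e^{in\theta}$, Hilbert transform $\mathcal H\mathbf 1=0$, $\mathcal He^{in\theta}=\mathrm{sgn}(n)e^{in\theta}$ ($n\ne0$); products are pointwise products of functions on $\mathbb S$. *)

From Stdlib Require Import Reals ZArith.
From Coquelicot Require Import Coquelicot.
Open Scope R_scope.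

Definition is_interval (I : R -> Prop) : Prop :=
  forall a b c, I a -> I c -> a <= b -> b <= c -> I b.

(* derivative of f at t, taken within the interval I (one-sided at endpoints) *)
Definition is_deriv_in (I : R -> Prop) (f : R -> R) (t l : R) : Prop :=
  filterlim (fun s => (f s - f t) / (s - t))
    (within (fun s => I s /\ s <> t) (locally t)) (locally l).

(* alpha : I x S -> R is C^infinity, S = R / 2 pi Z realised by 2 pi-periodicity
   in theta; d j k is the mixed partial derivative d_tau^j d_theta^k alpha. *)
Definition smooth_IxS (I : R -> Prop) (a : R -> R -> R) : Prop :=
  (forall t x, I t -> a t (x + 2 * PI) = a t x) /\
  exists d : nat -> nat -> R -> R -> R,
    (forall t x, I t -> d O O t x = a t x) /\
    (forall j k t x, I t -> is_derive (d j k t) x (d j (S k) t x)) /\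
    (forall j k t x, I t -> is_deriv_in I (fun s => d j k s x) t (d (S j) k t x)) /\
    (forall j k t x, I t ->
       filterlim (fun p : R * R => d j k (fst p) (snd p))
         (within (fun p : R * R => I (fst p)) (locally (t, x)))
         (locally (d j k t x))).

(* n-th Fourier coefficient (1/2pi) int_0^{2pi} f(x) e^{-inx} dx *)
Definition fcoef (f : R -> R) (n : Z) : C :=
  (/ (2 * PI) * RInt (fun x => f x * cos (IZR n * x)) 0 (2 * PI),
   - (/ (2 * PI) * RInt (fun x => f x * sin (IZR n * x)) 0 (2 * PI))).

Definition cexpi (n : Z) (x : R) : C := (cos (IZR n * x), sin (IZR n * x)).

(* Fourier multiplier: e^{inx} |-> m n e^{inx}, the series over Z summed as the
   limit of symmetric partial sums sum_{n=-N}^{N}. *)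
Definition fmult (m : Z -> R) (f : R -> R) (x : R) : C :=
  @lim (CompleteNormedModule.CompleteSpace _ C_CompleteNormedModule) (filtermap
        (fun N : nat =>
           sum_n (fun k : nat =>
                    let n := (Z.of_nat k - Z.of_nat N)%Z in
                    Cmult (Cmult (RtoC (m n)) (fcoef f n)) (cexpi n x))
                 (2 * N)%nat)
        eventually).

Definition Lam (f : R -> R) : R -> C := fmult (fun n => IZR (Z.abs n)) f.
(* Hilbert transform: H 1 = 0, H e^{in} = sgn(n) e^{in} *)
Definition Hilb (f : R -> R) : R -> C := fmult (fun n => IZR (Z.sgn n)) f.
Definition Dop (f : R -> R) (x : R) : C := Cmult (Copp Ci) (RtoC (Derive f x)).

(* Write K for the conjugate function of alpha, so that Hilb alpha = i K and
   K' = Lam alpha.  Since D alpha = -i alpha', the real part of the equation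
   reads  d alpha / d tau = -alpha K' + alpha' K = -alpha^2 (K / alpha)',
   hence  d/dtau int 1/alpha = -int (d alpha / d tau) / alpha^2
                              = int (K / alpha)' = 0  by periodicity. *)

From Stdlib Require Import Reals ZArith Lra Lia.
From Coquelicot Require Import Coquelicot.
Open Scope R_scope.

Lemma continuous_of_derive (f : R -> R) x l : is_derive f x l -> continuous f x.
Proof. intros H; apply (ex_derive_continuous (V:=R_NormedModule)); eexists; eauto. Qed.

Lemma ex_RInt_of_continuous (f : R -> R) a b : (forall z, continuous f z) -> ex_RInt f a b.
Proof. intros; apply (ex_RInt_continuous (V:=R_CompleteNormedModule)); auto. Qed.

Lemma Rcont_mult (f g : R -> R) x :
  continuous f x -> continuous g x -> continuous (fun y => f y * g y) x.
Proof. intros; apply (continuous_mult (K:=R_AbsRing)); auto. Qed.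

Lemma Rcont_plus (f g : R -> R) x :
  continuous f x -> continuous g x -> continuous (fun y => f y + g y) x.
Proof. intros; apply (continuous_plus (V:=R_NormedModule)); auto. Qed.

Lemma Rcont_opp (f : R -> R) x : continuous f x -> continuous (fun y => - f y) x.
Proof. intros; apply (continuous_opp (V:=R_NormedModule) f); auto. Qed.

Lemma Rcont_inv (f : R -> R) x : continuous f x -> f x <> 0 -> continuous (fun y => / f y) x.
Proof. intros. apply (continuous_comp f Rinv); auto. apply continuous_Rinv; auto. Qed.

Lemma Rcont_abs (f : R -> R) x : continuous f x -> continuous (fun y => Rabs (f y)) x.
Proof. intros. apply (continuous_comp f Rabs); auto. apply continuous_Rabs. Qed.

Lemma Rcont_const_mult (c : R) (f : R -> R) x : continuous f x -> continuous (fun y => c * f y) x.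
Proof. intros. apply (Rcont_mult (fun _ => c)); auto. apply continuous_const. Qed.

Lemma is_derive_eq (f : R -> R) x l l' : is_derive f x l -> l = l' -> is_derive f x l'.
Proof. intros H ->; exact H. Qed.

Lemma is_derive_Rmult (f g : R -> R) x df dg : is_derive f x df -> is_derive g x dg ->
  is_derive (fun y => f y * g y) x (df * g x + f x * dg).
Proof.
  intros. apply (is_derive_mult (K:=R_AbsRing) f g x df dg); auto.
  intros; apply Rmult_comm.
Qed.

(* Goals produced by Coquelicot's module operations are equalities in a
   structure whose carrier is R; expose them as equalities of reals. *)
Ltac real_eq := cbv beta; match goal with |- @eq _ ?a ?b => change (@eq R a b) end.

Lemma PI_neq0 : PI <> 0. Proof. pose proof PI_RGT_0; lra. Qed.

Lemma sin_2PI_mult (k : nat) : sin (INR k * (2 * PI)) = 0.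
Proof.
  replace (INR k * (2 * PI)) with (0 + 2 * INR k * PI) by ring.
  rewrite sin_period; apply sin_0.
Qed.

Lemma cos_2PI_mult (k : nat) : cos (INR k * (2 * PI)) = 1.
Proof.
  replace (INR k * (2 * PI)) with (0 + 2 * INR k * PI) by ring.
  rewrite cos_period; apply cos_0.
Qed.

Lemma continuous_sin_scaled (r x : R) : continuous (fun y => sin (r * y)) x.
Proof. apply (continuous_of_derive _ _ (r * cos (r * x))). auto_derive; auto; ring. Qed.

Lemma continuous_cos_scaled (r x : R) : continuous (fun y => cos (r * y)) x.
Proof. apply (continuous_of_derive _ _ (- r * sin (r * x))). auto_derive; auto; ring. Qed.

Lemma RInt_parts_period (h h' g g' : R -> R) :
  (forall x, is_derive h x (h' x)) -> (forall x, is_derive g x (g' x)) ->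
  (forall x, continuous h' x) -> (forall x, continuous g' x) ->
  h (2*PI) * g (2*PI) = h 0 * g 0 ->
  RInt (fun x => h x * g' x) 0 (2*PI) = - RInt (fun x => h' x * g x) 0 (2*PI).
Proof.
  intros Dh Dg Ch' Cg' Hbd.
  assert (Ch : forall x, continuous h x) by (intros; eapply continuous_of_derive; eauto).
  assert (Cg : forall x, continuous g x) by (intros; eapply continuous_of_derive; eauto).
  assert (FTC : is_RInt (fun x => h' x * g x + h x * g' x) 0 (2*PI)
                  (minus (h (2*PI) * g (2*PI)) (h 0 * g 0))).
  { apply (is_RInt_derive (fun x => h x * g x)).
    - intros x _. apply is_derive_Rmult; auto.
    - intros x _. apply Rcont_plus; apply Rcont_mult; auto. }
  apply (is_RInt_unique (V:=R_CompleteNormedModule)) in FTC.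
  rewrite (RInt_plus (V:=R_CompleteNormedModule)) in FTC
    by (apply ex_RInt_of_continuous; intros; apply Rcont_mult; auto).
  rewrite Hbd in FTC. unfold minus, plus, opp in FTC; simpl in FTC.
  real_eq. lra.
Qed.

Lemma RInt_mul_cos (h h' : R -> R) (k : nat) :
  (forall x, is_derive h x (h' x)) -> (forall x, continuous h' x) ->
  RInt (fun x => h x * cos (INR (S k) * x)) 0 (2*PI) =
  - / INR (S k) * RInt (fun x => h' x * sin (INR (S k) * x)) 0 (2*PI).
Proof.
  intros Dh Ch'. set (r := INR (S k)).
  assert (Hr : 0 < r) by (unfold r; apply lt_0_INR; lia).
  rewrite (RInt_parts_period h h' (fun x => / r * sin (r * x)) (fun x => cos (r * x))); auto.
  - rewrite (RInt_ext _ (fun x => scal (/ r) (h' x * sin (r * x))))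
      by (intros; unfold scal; simpl; unfold mult; simpl; ring).
    rewrite (RInt_scal (V:=R_CompleteNormedModule)).
    + unfold scal; simpl; unfold mult; simpl. ring.
    + apply ex_RInt_of_continuous; intros; apply Rcont_mult; auto.
      apply continuous_sin_scaled.
  - intros x. auto_derive; auto. field; lra.
  - intros x. apply continuous_cos_scaled.
  - unfold r. rewrite sin_2PI_mult, !Rmult_0_r, sin_0. ring.
Qed.

Lemma RInt_mul_sin (h h' : R -> R) (k : nat) :
  (forall x, is_derive h x (h' x)) -> (forall x, continuous h' x) -> h (2*PI) = h 0 ->
  RInt (fun x => h x * sin (INR (S k) * x)) 0 (2*PI) =
  / INR (S k) * RInt (fun x => h' x * cos (INR (S k) * x)) 0 (2*PI).
Proof.
  intros Dh Ch' Hper. set (r := INR (S k)).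
  assert (Hr : 0 < r) by (unfold r; apply lt_0_INR; lia).
  rewrite (RInt_parts_period h h' (fun x => - / r * cos (r * x)) (fun x => sin (r * x))); auto.
  - rewrite (RInt_ext _ (fun x => scal (- / r) (h' x * cos (r * x))))
      by (intros; unfold scal; simpl; unfold mult; simpl; ring).
    rewrite (RInt_scal (V:=R_CompleteNormedModule)).
    + unfold scal; simpl; unfold mult; simpl. ring.
    + apply ex_RInt_of_continuous; intros; apply Rcont_mult; auto.
      apply continuous_cos_scaled.
  - intros x. auto_derive; auto. field; lra.
  - intros x. apply continuous_sin_scaled.
  - unfold r. rewrite cos_2PI_mult, !Rmult_0_r, cos_0, Hper. ring.
Qed.

Lemma RInt_mul_bounded_le (g c : R -> R) :
  (forall x, continuous g x) -> (forall x, continuous c x) -> (forall x, Rabs (c x) <= 1) ->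
  Rabs (RInt (fun x => g x * c x) 0 (2*PI)) <= RInt (fun x => Rabs (g x)) 0 (2*PI).
Proof.
  intros Cg Cc Hc. pose proof PI_RGT_0.
  eapply Rle_trans.
  - apply abs_RInt_le; [lra|]. apply ex_RInt_of_continuous; intros; apply Rcont_mult; auto.
  - apply RInt_le; [lra| | |].
    + apply ex_RInt_of_continuous; intros; apply Rcont_abs, Rcont_mult; auto.
    + apply ex_RInt_of_continuous; intros; apply Rcont_abs; auto.
    + intros x _. rewrite Rabs_mult. specialize (Hc x). pose proof (Rabs_pos (g x)). nra.
Qed.

(* Three integrations by parts: the Fourier coefficients of a C^3 periodic
   function decay like the inverse cube of the frequency. *)
Section FourierDecay.
Variables f f1 f2 f3 : R -> R.
Hypothesis D0 : forall x, is_derive f x (f1 x).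
Hypothesis D1 : forall x, is_derive f1 x (f2 x).
Hypothesis D2 : forall x, is_derive f2 x (f3 x).
Hypothesis C3 : forall x, continuous f3 x.
Hypothesis P0 : f (2*PI) = f 0.
Hypothesis P1 : f1 (2*PI) = f1 0.
Hypothesis P2 : f2 (2*PI) = f2 0.

Definition L1_norm (g : R -> R) : R := RInt (fun x => Rabs (g x)) 0 (2*PI).

Lemma L1_norm_nonneg (g : R -> R) : (forall x, continuous g x) -> 0 <= L1_norm g.
Proof.
  intros Cg. unfold L1_norm. apply RInt_ge_0; [pose proof PI_RGT_0; lra| |].
  - apply ex_RInt_of_continuous; intros; apply Rcont_abs; auto.
  - intros; apply Rabs_pos.
Qed.

Lemma fourier_coef_decay (k : nat) :
  Rabs (RInt (fun x => f x * cos (INR (S k) * x)) 0 (2*PI)) +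
  Rabs (RInt (fun x => f x * sin (INR (S k) * x)) 0 (2*PI))
  <= 2 * L1_norm f3 / INR (S k) ^ 3.
Proof.
  assert (C1 : forall x, continuous f1 x) by (intros; eapply continuous_of_derive; eauto).
  assert (C2 : forall x, continuous f2 x) by (intros; eapply continuous_of_derive; eauto).
  rewrite (RInt_mul_cos f f1), (RInt_mul_sin f1 f2), (RInt_mul_cos f2 f3) by auto.
  rewrite (RInt_mul_sin f f1), (RInt_mul_cos f1 f2), (RInt_mul_sin f2 f3) by auto.
  set (r := INR (S k)). assert (Hr : 0 < r) by (unfold r; apply lt_0_INR; lia).
  rewrite !Rabs_mult, !Rabs_Ropp, !Rabs_inv, (Rabs_pos_eq r) by lra.
  assert (Bsin : Rabs (RInt (fun x => f3 x * sin (r * x)) 0 (2*PI)) <= L1_norm f3).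
  { apply RInt_mul_bounded_le; auto.
    - intros x. apply continuous_sin_scaled.
    - intros; apply Rabs_le, SIN_bound. }
  assert (Bcos : Rabs (RInt (fun x => f3 x * cos (r * x)) 0 (2*PI)) <= L1_norm f3).
  { apply RInt_mul_bounded_le; auto.
    - intros x. apply continuous_cos_scaled.
    - intros; apply Rabs_le, COS_bound. }
  assert (Hr3 : 0 < / r ^ 3) by (apply Rinv_0_lt_compat, pow_lt; lra).
  replace (2 * L1_norm f3 / r ^ 3) with (/ r ^ 3 * L1_norm f3 + / r ^ 3 * L1_norm f3)
    by (field; lra).
  apply Rplus_le_compat.
  - replace (/ r * (/ r * (/ r * Rabs (RInt (fun x => f3 x * sin (r * x)) 0 (2 * PI)))))
      with (/ r ^ 3 * Rabs (RInt (fun x => f3 x * sin (r * x)) 0 (2 * PI))) by (field; lra).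
    apply Rmult_le_compat_l; lra.
  - replace (/ r * (/ r * (/ r * Rabs (RInt (fun x => f3 x * cos (r * x)) 0 (2 * PI)))))
      with (/ r ^ 3 * Rabs (RInt (fun x => f3 x * cos (r * x)) 0 (2 * PI))) by (field; lra).
    apply Rmult_le_compat_l; lra.
Qed.
End FourierDecay.

Fixpoint psum {G : AbelianMonoid} (a : nat -> G) (N : nat) : G :=
  match N with O => zero | S N' => plus (psum a N') (a N') end.

Fixpoint rsum (a : nat -> R) (N : nat) : R :=
  match N with O => 0 | S N' => rsum a N' + a N' end.

Lemma rsum_ext (a b : nat -> R) N : (forall k, a k = b k) -> rsum a N = rsum b N.
Proof. intros H; induction N; simpl; auto. rewrite IHN, H; auto. Qed.

Lemma rsum_zero N : rsum (fun _ => 0) N = 0.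
Proof. induction N; simpl; auto. rewrite IHN; ring. Qed.

Lemma fst_psum (a : nat -> C) N : fst (psum a N) = rsum (fun k => fst (a k)) N.
Proof. induction N; simpl; auto. rewrite <- IHN. reflexivity. Qed.

Lemma snd_psum (a : nat -> C) N : snd (psum a N) = rsum (fun k => snd (a k)) N.
Proof. induction N; simpl; auto. rewrite <- IHN. reflexivity. Qed.

Lemma sum_n_shift {G : AbelianMonoid} (a : nat -> G) n :
  sum_n a (S n) = plus (a O) (sum_n (fun k => a (S k)) n).
Proof.
  induction n.
  - rewrite sum_Sn, !sum_O. reflexivity.
  - rewrite sum_Sn, IHn, sum_Sn, plus_assoc. reflexivity.
Qed.

Lemma sum_symmetric {G : AbelianMonoid} (h : Z -> G) N :
  sum_n (fun k => h (Z.of_nat k - Z.of_nat N)%Z) (2*N) =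
  plus (h 0%Z) (psum (fun k => plus (h (Z.of_nat (S k))) (h (- Z.of_nat (S k))%Z)) N).
Proof.
  induction N.
  - simpl. rewrite sum_O, plus_zero_r. reflexivity.
  - replace (2 * S N)%nat with (S (S (2 * N))) by lia.
    rewrite sum_Sn, sum_n_shift.
    rewrite (sum_n_ext _ (fun k => h (Z.of_nat k - Z.of_nat N)%Z)) by (intros; f_equal; lia).
    rewrite IHN. simpl psum.
    replace (Z.of_nat 0 - Z.of_nat (S N))%Z with (- Z.of_nat (S N))%Z by lia.
    replace (Z.of_nat (S (S (2 * N))) - Z.of_nat (S N))%Z with (Z.of_nat (S N)) by lia.
    set (x := h (- Z.of_nat (S N))%Z). set (y := h (Z.of_nat (S N))).
    set (P := psum _ N).
    rewrite (plus_comm x (plus (h 0%Z) P)), <- !plus_assoc, (plus_comm x y). reflexivity.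
Qed.

(* The real Fourier coefficients at frequency k+1 (up to the factor 1/pi). *)
Definition cos_coef (f : R -> R) (k : nat) := RInt (fun y => f y * cos (INR (S k) * y)) 0 (2*PI).
Definition sin_coef (f : R -> R) (k : nat) := RInt (fun y => f y * sin (INR (S k) * y)) 0 (2*PI).

Definition mult_term (m : Z -> R) (f : R -> R) (x : R) (n : Z) : C :=
  Cmult (Cmult (RtoC (m n)) (fcoef f n)) (cexpi n x).

Definition mult_partial_sum (m : Z -> R) (f : R -> R) (x : R) (N : nat) : C :=
  sum_n (fun k => mult_term m f x (Z.of_nat k - Z.of_nat N)%Z) (2*N).

Lemma fmult_as_lim m f x :
  fmult m f x = @lim (CompleteNormedModule.CompleteSpace _ C_CompleteNormedModule)
                   (filtermap (mult_partial_sum m f x) eventually).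
Proof. reflexivity. Qed.

Lemma IZR_of_nat_S k : IZR (Z.of_nat (S k)) = INR (S k).
Proof. rewrite INR_IZR_INZ; reflexivity. Qed.

Lemma mult_term_pair (m : Z -> R) (f : R -> R) (x : R) (k : nat) :
  (forall z, continuous f z) ->
  let r := INR (S k) in
  let mp := m (Z.of_nat (S k)) in
  let mn := m (- Z.of_nat (S k))%Z in
  plus (mult_term m f x (Z.of_nat (S k))) (mult_term m f x (- Z.of_nat (S k))) =
  ((mp + mn) / (2*PI) * (cos_coef f k * cos (r*x) + sin_coef f k * sin (r*x)),
   (mp - mn) / (2*PI) * (cos_coef f k * sin (r*x) - sin_coef f k * cos (r*x))).
Proof.
  intros Cf r mp mn.
  assert (Csin : forall z, continuous (fun y => f y * sin (r * y)) z).
  { intros z. apply Rcont_mult; auto using continuous_sin_scaled. }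
  assert (HA : RInt (fun y => f y * cos (IZR (- Z.of_nat (S k)) * y)) 0 (2*PI) = cos_coef f k).
  { apply RInt_ext. intros y _.
    rewrite opp_IZR, IZR_of_nat_S, Ropp_mult_distr_l_reverse, cos_neg. reflexivity. }
  assert (HB : RInt (fun y => f y * sin (IZR (- Z.of_nat (S k)) * y)) 0 (2*PI) = - sin_coef f k).
  { rewrite (RInt_ext _ (fun y => opp (f y * sin (r * y)))).
    - rewrite (RInt_opp (V:=R_CompleteNormedModule)) by (apply ex_RInt_of_continuous; auto).
      reflexivity.
    - intros y _. rewrite opp_IZR, IZR_of_nat_S, Ropp_mult_distr_l_reverse, sin_neg.
      rewrite <- Ropp_mult_distr_r. reflexivity. }
  unfold mult_term, fcoef, cexpi. rewrite HA, HB, !opp_IZR, !IZR_of_nat_S.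
  fold r. rewrite Ropp_mult_distr_l_reverse, cos_neg, sin_neg.
  fold mp mn. pose proof PI_neq0.
  unfold cos_coef, sin_coef in *; fold r in HA, HB |- *.
  apply injective_projections; simpl; field; auto.
Qed.

Lemma mult_partial_sum_eq (m : Z -> R) (f : R -> R) (x : R) (N : nat) :
  (forall z, continuous f z) -> m 0%Z = 0 ->
  mult_partial_sum m f x N =
  (rsum (fun k => (m (Z.of_nat (S k)) + m (- Z.of_nat (S k))%Z) / (2*PI) *
           (cos_coef f k * cos (INR (S k) * x) + sin_coef f k * sin (INR (S k) * x))) N,
   rsum (fun k => (m (Z.of_nat (S k)) - m (- Z.of_nat (S k))%Z) / (2*PI) *
           (cos_coef f k * sin (INR (S k) * x) - sin_coef f k * cos (INR (S k) * x))) N).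
Proof.
  intros Cf Hm0. unfold mult_partial_sum. rewrite sum_symmetric.
  assert (H0 : mult_term m f x 0 = (0,0)).
  { unfold mult_term. rewrite Hm0. apply injective_projections; simpl; ring. }
  rewrite H0. change (plus (0,0) ?p) with (Cplus (0,0) p). unfold Cplus.
  rewrite fst_psum, snd_psum. cbn [fst snd]. rewrite !Rplus_0_l.
  f_equal; apply rsum_ext; intros k; cbv beta; rewrite (mult_term_pair m f x k Cf); reflexivity.
Qed.

(* Real part of the partial sums of Lam f, and imaginary part of those of
   Hilb f (the conjugate function); the other components vanish. *)
Definition lam_sum (f : R -> R) (x : R) (N : nat) :=
  rsum (fun k => INR (S k) / PI *
          (cos_coef f k * cos (INR (S k) * x) + sin_coef f k * sin (INR (S k) * x))) N.
Definition conj_sum (f : R -> R) (x : R) (N : nat) :=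
  rsum (fun k => / PI *
          (cos_coef f k * sin (INR (S k) * x) - sin_coef f k * cos (INR (S k) * x))) N.

Lemma Lam_partial_sum f x N : (forall z, continuous f z) ->
  mult_partial_sum (fun n => IZR (Z.abs n)) f x N = (lam_sum f x N, 0).
Proof.
  intros Cf. rewrite mult_partial_sum_eq by auto. pose proof PI_neq0. f_equal.
  - apply rsum_ext; intros k. rewrite Z.abs_opp, Z.abs_eq, IZR_of_nat_S by lia. field; auto.
  - rewrite <- (rsum_zero N). apply rsum_ext; intros k. rewrite Z.abs_opp. field; auto.
Qed.

Lemma Hilb_partial_sum f x N : (forall z, continuous f z) ->
  mult_partial_sum (fun n => IZR (Z.sgn n)) f x N = (0, conj_sum f x N).
Proof.
  intros Cf. rewrite mult_partial_sum_eq by auto. pose proof PI_neq0. f_equal.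
  - rewrite <- (rsum_zero N). apply rsum_ext; intros k. simpl Z.sgn. field; auto.
  - apply rsum_ext; intros k. simpl Z.sgn. field; auto.
Qed.

Lemma small_over_nat (E eps : R) : 0 <= E -> 0 < eps -> exists N, (1 <= N)%nat /\ E / INR N < eps.
Proof.
  intros HE He. destruct (archimed_cor1 (eps / (E+1))) as [N [H1 H2]].
  { apply Rdiv_lt_0_compat; lra. }
  exists N; split; [lia|]. assert (0 < INR N) by (apply lt_0_INR; lia).
  apply Rle_lt_trans with (E * (eps / (E + 1))).
  - unfold Rdiv. apply Rmult_le_compat_l; lra.
  - apply Rlt_le_trans with ((E + 1) * (eps / (E + 1))).
    + apply Rmult_lt_compat_r; [apply Rdiv_lt_0_compat|]; lra.
    + right. field. lra.
Qed.

Lemma rsum_tail (a : nat -> R) (E : R) : 0 <= E ->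
  (forall k, Rabs (a k) <= E / INR (S k) ^ 2) ->
  forall N M, (1 <= N <= M)%nat -> Rabs (rsum a M - rsum a N) <= E / INR N.
Proof.
  intros HE Ha N M HNM.
  assert (Htel : forall d, Rabs (rsum a (N + d) - rsum a N) <= E * (/ INR N - / INR (N + d))).
  { induction d.
    - rewrite Nat.add_0_r, Rminus_diag, Rabs_R0. lra.
    - replace (N + S d)%nat with (S (N + d)) by lia. simpl rsum.
      replace (rsum a (N + d) + a (N + d)%nat - rsum a N)
        with ((rsum a (N + d) - rsum a N) + a (N + d)%nat) by ring.
      eapply Rle_trans; [apply Rabs_triang|].
      specialize (Ha (N + d)%nat).
      assert (Hn : 0 < INR (N + d)) by (apply lt_0_INR; lia).
      rewrite S_INR in *.
      assert (E / (INR (N + d) + 1) ^ 2 <= E * (/ INR (N + d) - / (INR (N + d) + 1))).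
      { unfold Rdiv. apply Rmult_le_compat_l; auto.
        apply Rle_trans with (/ (INR (N + d) * (INR (N + d) + 1))).
        - apply Rinv_le_contravar; [nra|]. simpl; nra.
        - right. field. lra. }
      lra. }
  replace M with (N + (M - N))%nat by lia.
  eapply Rle_trans; [apply Htel|].
  unfold Rdiv. apply Rmult_le_compat_l; auto.
  assert (0 < / INR (N + (M - N))) by (apply Rinv_0_lt_compat, lt_0_INR; lia). lra.
Qed.

Lemma ball_C (x y : C) (e : R) :
  @ball (CompleteNormedModule.CompleteSpace _ C_CompleteNormedModule) x e y <->
  Rabs (fst y - fst x) < e /\ Rabs (snd y - snd x) < e.
Proof. destruct x, y; simpl. split; intros [H1 H2]; split; auto. Qed.

Lemma lim_C_tail_bound (u : nat -> C) (E : R) : 0 <= E ->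
  (forall N M, (1 <= N <= M)%nat ->
     Rabs (fst (u M) - fst (u N)) <= E / INR N /\ Rabs (snd (u M) - snd (u N)) <= E / INR N) ->
  forall N, (1 <= N)%nat ->
  let l := @lim (CompleteNormedModule.CompleteSpace _ C_CompleteNormedModule)
                (filtermap u eventually) in
  Rabs (fst l - fst (u N)) <= E / INR N /\ Rabs (snd l - snd (u N)) <= E / INR N.
Proof.
  intros HE Hu N HN l.
  set (F := filtermap u eventually).
  assert (PF : ProperFilter F) by (apply filtermap_proper_filter; apply eventually_filter).
  assert (HC : @cauchy (CompleteNormedModule.CompleteSpace _ C_CompleteNormedModule) F).
  { intros eps. destruct (small_over_nat E eps HE (cond_pos eps)) as [N0 [H0 H0']].
    exists (u N0), N0. intros M HM. apply ball_C.
    destruct (Hu N0 M) as [A B]; [lia|]. split; lra. }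
  assert (Hl : forall eps : posreal, exists N1, forall M, (N1 <= M)%nat ->
            Rabs (fst (u M) - fst l) < eps /\ Rabs (snd (u M) - snd l) < eps).
  { intros eps.
    destruct (@complete_cauchy (CompleteNormedModule.CompleteSpace _ C_CompleteNormedModule)
                F PF HC eps) as [N1 HN1].
    exists N1. intros M HM. apply ball_C. apply HN1; auto. }
  assert (Htri : forall p q s : R, Rabs (p - q) <= Rabs (s - p) + Rabs (s - q)).
  { intros p q s. replace (p - q) with (- (s - p) + (s - q)) by ring.
    eapply Rle_trans; [apply Rabs_triang|]. rewrite Rabs_Ropp. lra. }
  split; apply le_epsilon; intros eps He;
    destruct (Hl (mkposreal eps He)) as [N1 HN1]; cbn [pos] in HN1;
    destruct (HN1 (max N N1)) as [A B]; try lia;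
    destruct (Hu N (max N N1)) as [A' B']; try lia.
  - pose proof (Htri (fst l) (fst (u N)) (fst (u (max N N1)))). lra.
  - pose proof (Htri (snd l) (snd (u N)) (snd (u (max N N1)))). lra.
Qed.

Lemma rsum_continuous (t : nat -> R -> R) N x :
  (forall k, continuous (t k) x) -> continuous (fun y => rsum (fun k => t k y) N) x.
Proof.
  intros H. induction N; simpl.
  - apply continuous_const.
  - apply (Rcont_plus (fun y => rsum (fun k => t k y) N) (fun y => t N y)); auto.
Qed.

Lemma rsum_derive (t dt : nat -> R -> R) N x : (forall k, is_derive (t k) x (dt k x)) ->
  is_derive (fun y => rsum (fun k => t k y) N) x (rsum (fun k => dt k x) N).
Proof.
  intros H. induction N; simpl.
  - apply (is_derive_const (K:=R_AbsRing) (V:=R_NormedModule)).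
  - apply (is_derive_plus (V:=R_NormedModule)
             (fun y => rsum (fun k => t k y) N) (fun y => t N y)); auto.
Qed.

Lemma freq_term_bound (c r A B u w M : R) :
  0 <= c <= r -> 0 < r -> Rabs A + Rabs B <= M / r ^ 3 -> Rabs u <= 1 -> Rabs w <= 1 ->
  Rabs (c / PI * (A * u + B * w)) <= M / r ^ 2.
Proof.
  intros Hc Hr HAB Hu Hw. pose proof PI2_1.
  assert (Hcomb : Rabs (A * u + B * w) <= Rabs A + Rabs B).
  { eapply Rle_trans; [apply Rabs_triang|]. rewrite !Rabs_mult.
    pose proof (Rabs_pos A); pose proof (Rabs_pos B); nra. }
  assert (HcPI : 0 <= c / PI <= r) by (split; [apply Rdiv_le_0_compat|apply Rle_div_l]; nra).
  rewrite Rabs_mult, (Rabs_pos_eq (c / PI)) by lra.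
  apply Rle_trans with (r * (M / r ^ 3)).
  - apply Rmult_le_compat; try lra; apply Rabs_pos.
  - right. field. lra.
Qed.

(* The real identity behind the theorem, at a fixed time: for a positive
   C^3 periodic function f, the quantity v = -f Re(Lam f) + f' Im(Hilb f)
   satisfies  int_0^{2pi} v / f^2 = 0.  Indeed, with K the conjugate function
   (K' = Re Lam f), v / f^2 = -(K / f)'.  We run this argument on the partial
   sums, where it is exact, and pass to the limit using the O(1/N) bounds. *)
Section VanishingIntegral.
Variables f f1 f2 f3 v : R -> R.
Hypothesis D0 : forall x, is_derive f x (f1 x).
Hypothesis D1 : forall x, is_derive f1 x (f2 x).
Hypothesis D2 : forall x, is_derive f2 x (f3 x).
Hypothesis C3 : forall x, continuous f3 x.
Hypothesis P0 : f (2*PI) = f 0.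
Hypothesis P1 : f1 (2*PI) = f1 0.
Hypothesis P2 : f2 (2*PI) = f2 0.
Hypothesis Pos : forall x, 0 < f x.
Hypothesis Cv : forall x, continuous v x.
Hypothesis Hv : forall x, v x = - f x * fst (Lam f x) + f1 x * snd (Hilb f x).

Let Cf x : continuous f x. Proof. eapply continuous_of_derive; eauto. Qed.
Let Cf1 x : continuous f1 x. Proof. eapply continuous_of_derive; eauto. Qed.

Let err := 2 * L1_norm f3.
Let err_nonneg : 0 <= err.
Proof. pose proof (L1_norm_nonneg f3 C3). unfold err. lra. Qed.

Let coef_bound k : Rabs (cos_coef f k) + Rabs (sin_coef f k) <= err / INR (S k) ^ 3.
Proof. apply (fourier_coef_decay f f1 f2 f3); auto. Qed.

Let Sk_pos k : 0 < INR (S k).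
Proof. apply lt_0_INR; lia. Qed.

Lemma lam_sum_tail x N M : (1 <= N <= M)%nat ->
  Rabs (lam_sum f x M - lam_sum f x N) <= err / INR N.
Proof.
  apply rsum_tail; auto. intros k.
  apply freq_term_bound; auto; try (apply Rabs_le; auto using COS_bound, SIN_bound).
  pose proof (Sk_pos k); lra.
Qed.

Lemma conj_sum_tail x N M : (1 <= N <= M)%nat ->
  Rabs (conj_sum f x M - conj_sum f x N) <= err / INR N.
Proof.
  apply rsum_tail; auto. intros k.
  replace (/ PI * (cos_coef f k * sin (INR (S k) * x) - sin_coef f k * cos (INR (S k) * x)))
    with (1 / PI * (cos_coef f k * sin (INR (S k) * x) + (- sin_coef f k) * cos (INR (S k) * x)))
    by (field; apply PI_neq0).
  apply freq_term_bound; auto; try (apply Rabs_le; auto using COS_bound, SIN_bound).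
  - rewrite S_INR; pose proof (pos_INR k); lra.
  - rewrite Rabs_Ropp. apply coef_bound.
Qed.

Lemma Lam_Hilb_approx x N : (1 <= N)%nat ->
  Rabs (fst (Lam f x) - lam_sum f x N) <= err / INR N /\
  Rabs (snd (Hilb f x) - conj_sum f x N) <= err / INR N.
Proof.
  intros HN.
  assert (Herr0 : forall N', (1 <= N')%nat -> Rabs (0 - 0) <= err / INR N').
  { intros N' HN'. rewrite Rminus_diag, Rabs_R0.
    apply Rdiv_le_0_compat; [|apply lt_0_INR]; auto; lia. }
  split.
  - pose proof (lim_C_tail_bound (mult_partial_sum (fun n => IZR (Z.abs n)) f x) err err_nonneg)
      as HL.
    unfold Lam. rewrite fmult_as_lim.
    replace (lam_sum f x N) with (fst (mult_partial_sum (fun n => IZR (Z.abs n)) f x N))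
      by (rewrite Lam_partial_sum; auto).
    apply HL; auto. intros N' M HNM. rewrite !Lam_partial_sum by auto.
    split; [apply lam_sum_tail | apply Herr0]; auto; lia.
  - pose proof (lim_C_tail_bound (mult_partial_sum (fun n => IZR (Z.sgn n)) f x) err err_nonneg)
      as HL.
    unfold Hilb. rewrite fmult_as_lim.
    replace (conj_sum f x N) with (snd (mult_partial_sum (fun n => IZR (Z.sgn n)) f x N))
      by (rewrite Hilb_partial_sum; auto).
    apply HL; auto. intros N' M HNM. rewrite !Hilb_partial_sum by auto.
    split; [apply Herr0 | apply conj_sum_tail]; auto; lia.
Qed.

Lemma conj_sum_derive x N : is_derive (fun y => conj_sum f y N) x (lam_sum f x N).
Proof.
  apply (rsum_derive
    (fun k y => / PI * (cos_coef f k * sin (INR (S k) * y) - sin_coef f k * cos (INR (S k) * y)))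
    (fun k y => INR (S k) / PI *
                (cos_coef f k * cos (INR (S k) * y) + sin_coef f k * sin (INR (S k) * y)))).
  intros k. generalize (INR (S k)); intros r. auto_derive; auto. real_eq. field. apply PI_neq0.
Qed.

Lemma conj_sum_period N : conj_sum f (2*PI) N = conj_sum f 0 N.
Proof.
  apply rsum_ext. intros k.
  rewrite (sin_2PI_mult (S k)), (cos_2PI_mult (S k)), !Rmult_0_r, sin_0, cos_0. ring.
Qed.

Lemma lam_sum_continuous x N : continuous (fun y => lam_sum f y N) x.
Proof.
  apply rsum_continuous. intros k.
  eapply continuous_of_derive. auto_derive; auto.
Qed.

Let f_ne0 x : f x <> 0. Proof. specialize (Pos x); lra. Qed.

Let Cinv_sq x : continuous (fun y => / (f y * f y)) x.
Proof. apply Rcont_inv; [apply Rcont_mult; auto | pose proof (Pos x); nra]. Qed.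

Let vN N x := - f x * lam_sum f x N + f1 x * conj_sum f x N.

Let CvN N x : continuous (vN N) x.
Proof.
  apply Rcont_plus; apply Rcont_mult; auto using Rcont_opp, lam_sum_continuous.
  eapply continuous_of_derive; apply conj_sum_derive.
Qed.

(* vN / f^2 is the derivative of the periodic function -conj_sum / f. *)
Lemma RInt_partial_sum_zero N : RInt (fun x => vN N x * / (f x * f x)) 0 (2*PI) = 0.
Proof.
  assert (FTC : is_RInt (fun x => vN N x * / (f x * f x)) 0 (2*PI)
            (minus (- conj_sum f (2*PI) N * / f (2*PI)) (- conj_sum f 0 N * / f 0))).
  { apply (is_RInt_derive (fun y => - conj_sum f y N * / f y)).
    - intros x _. eapply is_derive_eq.
      + apply is_derive_Rmult.
        * apply (is_derive_opp (K:=R_AbsRing) (V:=R_NormedModule) (fun y => conj_sum f y N)).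
          apply conj_sum_derive.
        * apply is_derive_inv; auto.
      + pose proof (f_ne0 x). unfold vN, opp; simpl. real_eq. field. auto.
    - intros x _. apply Rcont_mult; auto. }
  apply (is_RInt_unique (V:=R_CompleteNormedModule)) in FTC. rewrite FTC.
  rewrite conj_sum_period, P0. unfold minus, plus, opp; simpl. real_eq. ring.
Qed.

Lemma integrand_error x N : (1 <= N)%nat ->
  Rabs (v x * / (f x * f x) - vN N x * / (f x * f x)) <=
  err / INR N * ((Rabs (f x) + Rabs (f1 x)) * / (f x * f x)).
Proof.
  intros HN. rewrite Hv. unfold vN.
  destruct (Lam_Hilb_approx x N HN) as [A1 A2].
  assert (Hf : 0 < / (f x * f x)) by (apply Rinv_0_lt_compat; pose proof (Pos x); nra).
  replace ((- f x * fst (Lam f x) + f1 x * snd (Hilb f x)) * / (f x * f x) -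
           (- f x * lam_sum f x N + f1 x * conj_sum f x N) * / (f x * f x))
    with ((- f x * (fst (Lam f x) - lam_sum f x N) +
           f1 x * (snd (Hilb f x) - conj_sum f x N)) * / (f x * f x)) by ring.
  rewrite Rabs_mult, (Rabs_pos_eq (/ (f x * f x))) by lra.
  replace (err / INR N * ((Rabs (f x) + Rabs (f1 x)) * / (f x * f x)))
    with ((Rabs (f x) * (err / INR N) + Rabs (f1 x) * (err / INR N)) * / (f x * f x)) by ring.
  apply Rmult_le_compat_r; [lra|].
  eapply Rle_trans; [apply Rabs_triang|]. rewrite !Rabs_mult, Rabs_Ropp.
  apply Rplus_le_compat; apply Rmult_le_compat_l; auto; apply Rabs_pos.
Qed.

Let weight := RInt (fun x => (Rabs (f x) + Rabs (f1 x)) * / (f x * f x)) 0 (2*PI).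

Let Cweight x : continuous (fun x => (Rabs (f x) + Rabs (f1 x)) * / (f x * f x)) x.
Proof. apply Rcont_mult; auto. apply Rcont_plus; apply Rcont_abs; auto. Qed.

Lemma RInt_v_over_sq_bound N : (1 <= N)%nat ->
  Rabs (RInt (fun x => v x * / (f x * f x)) 0 (2*PI)) <= err / INR N * weight.
Proof.
  intros HN. pose proof PI_RGT_0.
  assert (Cg : forall x, continuous (fun x => v x * / (f x * f x) - vN N x * / (f x * f x)) x).
  { intros x. apply Rcont_plus; [|apply Rcont_opp]; apply Rcont_mult; auto. }
  replace (RInt (fun x => v x * / (f x * f x)) 0 (2*PI))
    with (RInt (fun x => minus (v x * / (f x * f x)) (vN N x * / (f x * f x))) 0 (2*PI)).
  2:{ rewrite (RInt_minus (V:=R_CompleteNormedModule))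
        by (apply ex_RInt_of_continuous; intros; apply Rcont_mult; auto).
      rewrite RInt_partial_sum_zero. unfold minus, plus, opp; simpl. ring. }
  eapply Rle_trans; [apply abs_RInt_le; [lra | apply ex_RInt_of_continuous; auto]|].
  unfold weight. rewrite <- (RInt_scal (V:=R_CompleteNormedModule))
    by (apply ex_RInt_of_continuous; auto).
  apply RInt_le; [lra | | |].
  - apply ex_RInt_of_continuous; intros; apply Rcont_abs; auto.
  - apply ex_RInt_of_continuous; intros; apply Rcont_const_mult; auto.
  - intros x _. apply integrand_error; auto.
Qed.

Lemma RInt_v_over_sq_zero : RInt (fun x => v x * / (f x * f x)) 0 (2*PI) = 0.
Proof.
  assert (Hw : 0 <= weight).
  { apply RInt_ge_0; [pose proof PI_RGT_0; lra | apply ex_RInt_of_continuous; auto |].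
    intros x _. apply Rmult_le_pos.
    - pose proof (Rabs_pos (f x)); pose proof (Rabs_pos (f1 x)); lra.
    - apply Rlt_le, Rinv_0_lt_compat. pose proof (Pos x); nra. }
  apply Rabs_eq_0, Rle_antisym; [|apply Rabs_pos].
  apply Rnot_lt_le. intros Hnz.
  destruct (small_over_nat (err * weight) _ (Rmult_le_pos _ _ err_nonneg Hw) Hnz)
    as [N [HN HN']].
  pose proof (RInt_v_over_sq_bound N HN).
  replace (err / INR N * weight) with (err * weight / INR N) in * by (field; apply not_0_INR; lia).
  lra.
Qed.
End VanishingIntegral.

Definition segment (a b : R) (s : R) : Prop := a <= s <= b.
Definition clamp (a b s : R) := Rmax a (Rmin b s).

Lemma clamp_id a b s : a <= s <= b -> clamp a b s = s.
Proof. intros H; unfold clamp, Rmax, Rmin; repeat destruct Rle_dec; lra. Qed.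
Lemma clamp_below a b s : a <= b -> s <= a -> clamp a b s = a.
Proof. intros H H'; unfold clamp, Rmax, Rmin; repeat destruct Rle_dec; lra. Qed.
Lemma clamp_above a b s : a <= b -> b <= s -> clamp a b s = b.
Proof. intros H H'; unfold clamp, Rmax, Rmin; repeat destruct Rle_dec; lra. Qed.
Lemma clamp_range a b s : a <= b -> a <= clamp a b s <= b.
Proof. intros H; unfold clamp, Rmax, Rmin; repeat destruct Rle_dec; lra. Qed.
Lemma clamp_lipschitz a b s s' : a <= b -> Rabs (clamp a b s - clamp a b s') <= Rabs (s - s').
Proof.
  intros H; unfold clamp, Rmax, Rmin; repeat destruct Rle_dec;
    unfold Rabs; repeat destruct Rcase_abs; lra.
Qed.

Lemma is_deriv_in_eps (I : R -> Prop) f t l : is_deriv_in I f t l ->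
  forall eps, 0 < eps -> exists delta, 0 < delta /\
    forall s, I s -> s <> t -> Rabs (s - t) < delta -> Rabs ((f s - f t) / (s - t) - l) < eps.
Proof.
  intros H eps Heps.
  apply (filterlim_locally (F := within (fun s => I s /\ s <> t) (locally t)))
    with (eps := mkposreal _ Heps) in H.
  destruct H as [d Hd]. exists d. split; [apply cond_pos|].
  intros s Is Hst Hd'. apply (Hd s); auto.
Qed.

Lemma is_deriv_in_subset (I J : R -> Prop) f t l : (forall s, J s -> I s) ->
  is_deriv_in I f t l -> is_deriv_in J f t l.
Proof.
  intros HJI H. unfold is_deriv_in.
  eapply filterlim_filter_le_1; [|exact H].
  intros P [d Hd]. exists d. intros s Hs [Js Hst]. apply Hd; auto.
Qed.

Lemma is_deriv_in_of_derive (I : R -> Prop) (g f : R -> R) t l :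
  (forall s, I s -> g s = f s) -> I t -> is_derive g t l -> is_deriv_in I f t l.
Proof.
  intros Hgf It H. apply is_derive_Reals in H.
  unfold is_deriv_in. apply (filterlim_locally (F := within _ (locally t))). intros eps.
  destruct (H eps (cond_pos eps)) as [d Hd]. exists d. intros s Hs [Is Hst].
  change R in s. change (Rabs (s - t) < d) in Hs.
  specialize (Hd (s - t) ltac:(lra) Hs). replace (t + (s - t)) with s in Hd by ring.
  rewrite <- !Hgf; auto.
Qed.

Lemma segment_within_proper a b t : a < b -> a <= t <= b ->
  ProperFilter' (within (fun s => segment a b s /\ s <> t) (locally t)).
Proof.
  intros Hab Ht. constructor; [|apply within_filter, locally_filter].
  intros [d Hd]. pose proof (cond_pos d).
  destruct (Rlt_dec t b) as [Htb|Htb].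
  - set (m := Rmin d (b - t)).
    assert (0 < m <= d /\ m <= b - t)
      by (unfold m; repeat split; [apply Rmin_glb_lt| apply Rmin_l | apply Rmin_r]; lra).
    apply (Hd (t + m / 2)).
    + change (Rabs (t + m / 2 - t) < d). rewrite Rabs_right; lra.
    + unfold segment; split; lra.
  - set (m := Rmin d (t - a)).
    assert (0 < m <= d /\ m <= t - a)
      by (unfold m; repeat split; [apply Rmin_glb_lt| apply Rmin_l | apply Rmin_r]; lra).
    apply (Hd (t - m / 2)).
    + change (Rabs (t - m / 2 - t) < d). rewrite Rabs_left; lra.
    + unfold segment; split; lra.
Qed.

Lemma is_deriv_in_unique (I : R -> Prop) a b f t l1 l2 :
  a < b -> (forall s, a <= s <= b -> I s) -> a <= t <= b ->
  is_deriv_in I f t l1 -> is_deriv_in I f t l2 -> l1 = l2.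
Proof.
  intros Hab HI Ht H1 H2.
  apply (is_deriv_in_subset I (segment a b)) in H1, H2; auto.
  pose proof (segment_within_proper a b t Hab Ht).
  apply (filterlim_locally_unique
           (F := within (fun s => segment a b s /\ s <> t) (locally t))
           (fun s => (f s - f t) / (s - t))); auto.
Qed.

Definition tangent_ext (a b : R) (f l : R -> R) (s : R) : R :=
  f (clamp a b s) + (s - clamp a b s) * l (clamp a b s).

Section TangentExtension.
Variables (a b : R) (f l : R -> R).
Hypothesis Hab : a < b.
Hypothesis Hder : forall t, a <= t <= b -> is_deriv_in (segment a b) f t (l t).

Lemma tangent_ext_in s : a <= s <= b -> tangent_ext a b f l s = f s.
Proof. intros Hs. unfold tangent_ext. rewrite clamp_id by auto. ring. Qed.

Lemma tangent_ext_below s : s <= a -> tangent_ext a b f l s = f a + (s - a) * l a.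
Proof. intros Hs. unfold tangent_ext. rewrite clamp_below by lra. reflexivity. Qed.

Lemma tangent_ext_above s : b <= s -> tangent_ext a b f l s = f b + (s - b) * l b.
Proof. intros Hs. unfold tangent_ext. rewrite clamp_above by lra. reflexivity. Qed.

(* Outside [a, b] the extension is locally affine. *)
Lemma tangent_ext_derive_outside s0 : s0 < a \/ b < s0 ->
  is_derive (tangent_ext a b f l) s0 (l (clamp a b s0)).
Proof.
  intros [Hs0|Hs0].
  - rewrite clamp_below by lra.
    apply (is_derive_ext_loc (fun s => f a + (s - a) * l a)).
    + exists (mkposreal (a - s0) ltac:(lra)). intros s Hs. change (Rabs (s - s0) < a - s0) in Hs.
      rewrite tangent_ext_below; [reflexivity|]. apply Rabs_def2 in Hs. lra.
    + auto_derive; auto. ring.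
  - rewrite clamp_above by lra.
    apply (is_derive_ext_loc (fun s => f b + (s - b) * l b)).
    + exists (mkposreal (s0 - b) ltac:(lra)). intros s Hs. change (Rabs (s - s0) < s0 - b) in Hs.
      rewrite tangent_ext_above; [reflexivity|]. apply Rabs_def2 in Hs. lra.
    + auto_derive; auto. ring.
Qed.

(* Inside [a, b], nearby points on the segment use the derivative within
   [a, b]; nearby points off the segment only occur at an endpoint, where
   the extension is the tangent line itself. *)
Lemma tangent_ext_derive_inside s0 : a <= s0 <= b ->
  is_derive (tangent_ext a b f l) s0 (l s0).
Proof.
  intros Hs0. apply is_derive_Reals. intros eps Heps.
  destruct (is_deriv_in_eps _ _ _ _ (Hder s0 Hs0) eps Heps) as [d0 [Hd0 Hq]].
  set (gap_a := if Rlt_dec a s0 then s0 - a else d0).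
  set (gap_b := if Rlt_dec s0 b then b - s0 else d0).
  assert (Hga : 0 < gap_a) by (unfold gap_a; destruct (Rlt_dec a s0); lra).
  assert (Hgb : 0 < gap_b) by (unfold gap_b; destruct (Rlt_dec s0 b); lra).
  assert (Hd : 0 < Rmin d0 (Rmin gap_a gap_b)) by (repeat apply Rmin_glb_lt; auto).
  exists (mkposreal _ Hd). intros h Hh Hhd. cbn [pos] in Hhd.
  assert (Hh0 : Rabs h < d0) by (eapply Rlt_le_trans; [apply Hhd | apply Rmin_l]).
  assert (Hha : Rabs h < gap_a)
    by (eapply Rlt_le_trans; [apply Hhd|]; eapply Rle_trans; [apply Rmin_r | apply Rmin_l]).
  assert (Hhb : Rabs h < gap_b)
    by (eapply Rlt_le_trans; [apply Hhd|]; eapply Rle_trans; [apply Rmin_r | apply Rmin_r]).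
  apply Rabs_def2 in Hha, Hhb.
  rewrite (tangent_ext_in s0) by auto.
  destruct (Rlt_dec (s0 + h) a) as [Hl|Hl]; [|destruct (Rlt_dec b (s0 + h)) as [Hr|Hr]].
  - assert (s0 = a) by (unfold gap_a in Hha; destruct (Rlt_dec a s0); lra). subst s0.
    rewrite tangent_ext_below by lra.
    replace ((f a + (a + h - a) * l a - f a) / h - l a) with 0 by (field; auto).
    rewrite Rabs_R0; auto.
  - assert (s0 = b) by (unfold gap_b in Hhb; destruct (Rlt_dec s0 b); lra). subst s0.
    rewrite tangent_ext_above by lra.
    replace ((f b + (b + h - b) * l b - f b) / h - l b) with 0 by (field; auto).
    rewrite Rabs_R0; auto.
  - rewrite tangent_ext_in by lra.
    specialize (Hq (s0 + h) ltac:(unfold segment; lra) ltac:(lra)).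
    replace (s0 + h - s0) with h in Hq by ring. apply Hq, Hh0.
Qed.

Lemma tangent_ext_derive s0 : is_derive (tangent_ext a b f l) s0 (l (clamp a b s0)).
Proof.
  destruct (Rlt_dec s0 a) as [H|H]; [|destruct (Rlt_dec b s0) as [H'|H']].
  - apply tangent_ext_derive_outside; auto.
  - apply tangent_ext_derive_outside; auto.
  - rewrite clamp_id by lra. apply tangent_ext_derive_inside. lra.
Qed.
End TangentExtension.

Lemma periodic_derive (h h' : R -> R) : (forall x, h (x + 2*PI) = h x) ->
  (forall x, is_derive h x (h' x)) -> forall x, h' (x + 2*PI) = h' x.
Proof.
  intros Hp Hd x.
  assert (H : is_derive (fun y => h (y + 2*PI)) x (h' (x + 2*PI))).
  { eapply is_derive_eq.
    - apply (is_derive_comp (V:=R_NormedModule) h (fun y => y + 2*PI)); [apply Hd|].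
      auto_derive; auto.
    - unfold scal; simpl; unfold mult; simpl. real_eq. ring. }
  apply (is_derive_ext _ h) in H; auto.
  rewrite <- (is_derive_unique _ _ _ H). apply is_derive_unique; auto.
Qed.

Lemma evolution_rhs_real_part (p : R) (L H : C) (dp : R) :
  fst (Cplus (Copp (Cmult (RtoC p) L)) (Cmult H (Cmult (Copp Ci) (RtoC dp)))) =
  - p * fst L + snd H * dp.
Proof. destruct L, H; simpl; ring. Qed.

Section Evolution.
Variable I : R -> Prop.
Variable alpha : R -> R -> R.
Variable d : nat -> nat -> R -> R -> R.
Hypothesis Hper : forall t x, I t -> alpha t (x + 2 * PI) = alpha t x.
Hypothesis Hd0 : forall t x, I t -> d O O t x = alpha t x.
Hypothesis Hdx : forall j k t x, I t -> is_derive (d j k t) x (d j (S k) t x).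
Hypothesis Hdt : forall j k t x, I t -> is_deriv_in I (fun s => d j k s x) t (d (S j) k t x).
Hypothesis Hcont : forall j k t x, I t ->
       filterlim (fun p : R * R => d j k (fst p) (snd p))
         (within (fun p : R * R => I (fst p)) (locally (t, x)))
         (locally (d j k t x)).
Hypothesis Hpos : forall t x, I t -> 0 < alpha t x.
Hypothesis Hev : forall t x, I t ->
     exists v : R,
       is_deriv_in I (fun s => alpha s x) t v /\
       RtoC v =
         Cplus (Copp (Cmult (RtoC (alpha t x)) (Lam (alpha t) x)))
               (Cmult (Hilb (alpha t) x) (Dop (alpha t) x)).
Variables a b : R.
Hypothesis Hab : a < b.
Hypothesis HIab : forall s, a <= s <= b -> I s.

Let alpha_ne0 t x : I t -> alpha t x <> 0.
Proof. intros It. specialize (Hpos t x It). lra. Qed.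

Lemma alpha_dx t x : I t -> is_derive (alpha t) x (d 0 1 t x).
Proof. intros It. apply (is_derive_ext (d 0 0 t)); [intros; apply Hd0; auto | apply Hdx; auto]. Qed.

Lemma alpha_continuous_x t x : I t -> continuous (alpha t) x.
Proof. intros It. eapply continuous_of_derive. apply alpha_dx; auto. Qed.

Lemma alpha_dt t x : I t -> is_deriv_in I (fun s => alpha s x) t (d 1 0 t x).
Proof.
  intros It. unfold is_deriv_in. eapply filterlim_within_ext; [|apply (Hdt 0 0 t x It)].
  intros s [Is _]. cbv beta. rewrite !Hd0; auto.
Qed.

(* At each time of [a, b], int_0^{2pi} (d alpha / d tau) / alpha^2 = 0: the
   time derivative is the v of RInt_v_over_sq_zero, by the real part of the
   evolution equation. *)
Lemma RInt_time_derivative_zero t : a <= t <= b ->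
  RInt (fun x => d 1 0 t x * / (alpha t x * alpha t x)) 0 (2*PI) = 0.
Proof.
  intros Ht. assert (It : I t) by auto.
  assert (P1 : forall x, d 0 1 t (x + 2*PI) = d 0 1 t x).
  { apply (periodic_derive (d 0 0 t)).
    - intros x. rewrite !Hd0; auto.
    - intros x. apply Hdx; auto. }
  assert (P2 : forall x, d 0 2 t (x + 2*PI) = d 0 2 t x).
  { apply (periodic_derive (d 0 1 t)); auto. }
  apply (RInt_v_over_sq_zero (alpha t) (d 0 1 t) (d 0 2 t) (d 0 3 t) (d 1 0 t));
    auto using alpha_dx.
  - intros; eapply continuous_of_derive; apply Hdx; auto.
  - specialize (Hper t 0 It). rewrite Rplus_0_l in Hper. auto.
  - specialize (P1 0). rewrite Rplus_0_l in P1. auto.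
  - specialize (P2 0). rewrite Rplus_0_l in P2. auto.
  - intros; eapply continuous_of_derive; apply Hdx; auto.
  - intros x. destruct (Hev t x It) as [v [Hv1 Hv2]].
    assert (Ev : v = d 1 0 t x)
      by (apply (is_deriv_in_unique I a b (fun s => alpha s x) t); auto using alpha_dt).
    subst v. apply (f_equal fst) in Hv2. unfold Dop in Hv2.
    rewrite evolution_rhs_real_part in Hv2. change (fst (RtoC ?v)) with v in Hv2.
    rewrite Hv2, (is_derive_unique _ _ _ (alpha_dx t x It)). ring.
Qed.

Definition inv_alpha_dt (t x : R) : R := - d 1 0 t x / (alpha t x)^2.

Lemma inv_alpha_deriv_in t x : a <= t <= b ->
  is_deriv_in (segment a b) (fun s => / alpha s x) t (inv_alpha_dt t x).
Proof.
  intros Ht.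
  set (A := tangent_ext a b (fun s => alpha s x) (fun s => d 1 0 s x)).
  assert (DA : is_derive A t (d 1 0 t x)).
  { rewrite <- (clamp_id a b t Ht) at 2. apply tangent_ext_derive; auto.
    intros s Hs. apply (is_deriv_in_subset I); auto using alpha_dt. }
  assert (EA : forall s, segment a b s -> A s = alpha s x)
    by (intros s Hs; unfold A; rewrite tangent_ext_in; auto).
  apply (is_deriv_in_of_derive _ (fun s => / A s)); auto.
  - intros s Hs. rewrite EA; auto.
  - eapply is_derive_eq; [apply is_derive_inv; [apply DA | rewrite EA; auto]|].
    rewrite EA by auto. reflexivity.
Qed.

Definition inv_alpha_ext (s x : R) : R :=
  tangent_ext a b (fun s => / alpha s x) (fun t => inv_alpha_dt t x) s.

Lemma inv_alpha_ext_derive x s :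
  is_derive (fun s => inv_alpha_ext s x) s (inv_alpha_dt (clamp a b s) x).
Proof. apply tangent_ext_derive; auto. intros; apply inv_alpha_deriv_in; auto. Qed.

Let I_clamp s : I (clamp a b s).
Proof. apply HIab, clamp_range; lra. Qed.

Lemma d_clamp_continuous j k z0 :
  continuous (fun z : R * R => d j k (clamp a b (fst z)) (snd z)) z0.
Proof.
  apply (filterlim_comp _ _ _ (fun z : R * R => (clamp a b (fst z), snd z))
           (fun p : R * R => d j k (fst p) (snd p)) _
           (within (fun p : R * R => I (fst p)) (locally (clamp a b (fst z0), snd z0)))).
  - intros P [eps HP]. exists eps. intros z [H1 H2]. apply HP; [split|apply I_clamp].
    + change (Rabs (clamp a b (fst z) - clamp a b (fst z0)) < eps).
      eapply Rle_lt_trans; [apply clamp_lipschitz; lra | apply H1].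
    + apply H2.
  - apply Hcont, I_clamp.
Qed.

Lemma inv_alpha_dt_continuous z0 :
  continuous (fun z : R * R => inv_alpha_dt (clamp a b (fst z)) (snd z)) z0.
Proof.
  set (Dt := fun z : R * R => d 1 0 (clamp a b (fst z)) (snd z)).
  set (A := fun z : R * R => d 0 0 (clamp a b (fst z)) (snd z)).
  apply (continuous_ext (fun z => - Dt z * / (A z * (A z * 1)))).
  { intros z. unfold Dt, A, inv_alpha_dt. rewrite Hd0 by apply I_clamp. unfold Rdiv. simpl. ring. }
  assert (CDt : continuous Dt z0) by apply d_clamp_continuous.
  assert (CA : continuous A z0) by apply d_clamp_continuous.
  apply (continuous_mult (K:=R_AbsRing)).
  - apply (continuous_opp (V:=R_NormedModule)), CDt.
  - apply (continuous_comp _ Rinv); [|apply continuous_Rinv].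
    + apply (continuous_mult (K:=R_AbsRing)); auto.
      apply (continuous_mult (K:=R_AbsRing)); auto. apply continuous_const.
    + unfold A. rewrite Hd0, Rmult_1_r by apply I_clamp.
      apply Rgt_not_eq, Rmult_lt_0_compat; apply Hpos, I_clamp.
Qed.

Lemma inv_alpha_ext_continuous_x s x : continuous (fun y => inv_alpha_ext s y) x.
Proof.
  unfold inv_alpha_ext, tangent_ext. apply Rcont_plus.
  - apply Rcont_inv; [apply alpha_continuous_x, I_clamp | apply alpha_ne0, I_clamp].
  - apply Rcont_const_mult.
    apply (continuous_comp_2 (fun _ => s) (fun y => y)
             (fun u v => inv_alpha_dt (clamp a b u) v));
      [apply continuous_const | apply continuous_id | apply inv_alpha_dt_continuous].
Qed.

Lemma RInt_inv_alpha_dt_zero t : a <= t <= b -> RInt (fun x => inv_alpha_dt t x) 0 (2*PI) = 0.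
Proof.
  intros Ht. assert (It : I t) by auto.
  assert (Ex : ex_RInt (fun x => d 1 0 t x * / (alpha t x * alpha t x)) 0 (2*PI)).
  { apply ex_RInt_of_continuous. intros x. apply Rcont_mult.
    - eapply continuous_of_derive; apply Hdx; auto.
    - apply Rcont_inv; [apply Rcont_mult; apply alpha_continuous_x; auto|].
      pose proof (Hpos t x It). nra. }
  rewrite (RInt_ext _ (fun x => opp (d 1 0 t x * / (alpha t x * alpha t x)))).
  - rewrite (RInt_opp (V:=R_CompleteNormedModule)) by exact Ex.
    rewrite RInt_time_derivative_zero by auto. unfold opp; simpl. real_eq. ring.
  - intros x _. unfold inv_alpha_dt, opp; simpl. field. apply alpha_ne0; auto.
Qed.

Lemma RInt_inv_alpha_ext_derive s0 :
  is_derive (fun s => RInt (fun x => inv_alpha_ext s x) 0 (2*PI)) s0 0.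
Proof.
  eapply is_derive_eq; [apply is_derive_RInt_param|].
  - apply filter_forall. intros s x _. eexists; apply inv_alpha_ext_derive.
  - intros x _. apply (continuity_2d_pt_ext (fun u v => inv_alpha_dt (clamp a b u) v)).
    + intros u v. symmetry. apply is_derive_unique, inv_alpha_ext_derive.
    + apply continuity_2d_pt_filterlim, inv_alpha_dt_continuous.
  - apply filter_forall. intros s. apply ex_RInt_of_continuous, inv_alpha_ext_continuous_x.
  - rewrite (RInt_ext _ (fun x => inv_alpha_dt (clamp a b s0) x)).
    + apply RInt_inv_alpha_dt_zero, clamp_range. lra.
    + intros x _. apply is_derive_unique, inv_alpha_ext_derive.
Qed.

(* Mean value theorem for the extended integral, which agrees with
   int 1/alpha on [a, b]. *)
Lemma RInt_inv_alpha_endpoints :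
  RInt (fun x => / alpha a x) 0 (2*PI) = RInt (fun x => / alpha b x) 0 (2*PI).
Proof.
  set (G := fun s => RInt (fun x => inv_alpha_ext s x) 0 (2*PI)).
  assert (HG : forall s, a <= s <= b -> G s = RInt (fun x => / alpha s x) 0 (2*PI)).
  { intros s Hs. apply RInt_ext. intros x _. unfold inv_alpha_ext. rewrite tangent_ext_in; auto. }
  rewrite <- !HG by lra.
  destruct (MVT_gen G a b (fun _ => 0)) as [c [_ Hc]].
  - intros s _. apply RInt_inv_alpha_ext_derive.
  - intros s _. apply continuity_pt_filterlim.
    eapply continuous_of_derive. apply RInt_inv_alpha_ext_derive.
  - lra.
Qed.
End Evolution.

Theorem lemma6p3 (I : R -> Prop) (alpha : R -> R -> R) :
  is_interval I ->
  smooth_IxS I alpha ->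
  (forall t x, I t -> 0 < alpha t x) ->
  (forall t x, I t ->
     exists v : R,
       is_deriv_in I (fun s => alpha s x) t v /\
       RtoC v =
         Cplus (Copp (Cmult (RtoC (alpha t x)) (Lam (alpha t) x)))
               (Cmult (Hilb (alpha t) x) (Dop (alpha t) x))) ->
  forall t1 t2, I t1 -> I t2 ->
    RInt (fun x => / alpha t1 x) 0 (2 * PI) =
    RInt (fun x => / alpha t2 x) 0 (2 * PI).
Proof.
  intros HI [Hper [d [Hd0 [Hdx [Hdt Hcont]]]]] Hpos Hev t1 t2 I1 I2.
  assert (Hseg : forall a b, a < b -> I a -> I b ->
            RInt (fun x => / alpha a x) 0 (2 * PI) = RInt (fun x => / alpha b x) 0 (2 * PI)).
  { intros a b Hab Ia Ib. apply (RInt_inv_alpha_endpoints I alpha d); auto.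
    intros s Hs. apply (HI a s b); tauto. }
  destruct (Rtotal_order t1 t2) as [H|[H|H]].
  - apply Hseg; auto.
  - subst; reflexivity.
  - symmetry; apply Hseg; auto.
Qed.
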